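(* Let $n\ge1$ and let $\wp\in \mathrm{C}^{0,n+1}$ be a primitive idempotent, $E:=\mathrm{C}^{0,n+1}\wp$. Then $P_n:=\ker(\Phi: A_n\otimes_\mathbb{R} E\to A_n\otimes_\mathbb{R} E)$ is a finitely generated projective $A_n$-module and the restriction of the symmetric bilinear form $\hat\beta$ to $P_n$ is non-degenerate.
   Context: $A_n:=\mathbb{R}[x_0,\dots,x_n]/(\sum_i x_i^2-1)$. $\mathrm{C}^{0,n+1}$ is the real Clifford algebra generated by $e_0,\dots,e_n$ with $e_i^2=1$ and $e_ie_j=-e_je_i$ for $i\ne j$. $\Phi$ is the $A_n$-linear map $\Phi(a\otimes u)=\tfrac12\big(\sum_{i=0}^n x_ia\otimes e_iu + a\otimes u\big)$, i.e. left multiplication by $\tfrac12(\mathbf{x}+1)$ with $\mathbf{x}=\sum_i x_i\otimes e_i$ (it preserves $A_n\otimes E$). $\sigma$ is the canonical (reversing) involution of $\mathrm{C}^{0,n+1}$ ($\sigma(e_i)=e_i$, $\sigma(xy)=\sigma(y)\sigma(x)$), $\beta(x,y)=\operatorname{Tr}(\sigma(x)y)$ is the trace form on $\mathrm{C}^{0,n+1}$ (Tr the trace of left multiplication), and $\hat\beta(a\otimes x,b\otimes y):=ab\,\beta(x,y)$ on $A_n\otimes_\mathbb{R} E$. *)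

From HB Require Import structures.
From mathcomp Require Import all_boot all_order all_algebra.
From mathcomp Require Import ring_quotient generic_quotient.
From mathcomp Require Import mpoly.
From mathcomp Require Import reals.
From Stdlib Require Import ClassicalEpsilon.

Set Implicit Arguments.
Unset Strict Implicit.
Unset Printing Implicit Defensive.

Import GRing.Theory.
Local Open Scope ring_scope.
Local Open Scope quotient_scope.

Section Sphere.
Variables (R : realType) (n : nat).

Definition sph_poly : {mpoly R[n.+1]} := \sum_(i < n.+1) 'X_i ^+ 2 - 1.

Definition sph_ideal : {pred {mpoly R[n.+1]}} := fun p =>
  if excluded_middle_informative (exists q, p = q * sph_poly) then true else false.

Lemma sph_idealP p : reflect (exists q, p = q * sph_poly) (p \in sph_ideal).
Proof.
rewrite unfold_in /sph_ideal.
by case: excluded_middle_informative => h; constructor.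
Qed.

Lemma sph_ideal_closed : idealr_closed sph_ideal.
Proof.
split.
- by apply/sph_idealP; exists 0; rewrite mul0r.
- apply/negP => /sph_idealP [q hq].
  pose v : 'I_n.+1 -> R := fun i => if i == ord0 then 1 else 0.
  have := congr1 (meval v) hq.
  rewrite meval1 mevalM /sph_poly mevalB meval1 raddf_sum.
  rewrite (bigD1 ord0) //= big1; last first.
    by move=> i /negPf hi; rewrite expr2 mevalM mevalXU /v hi mul0r.
  rewrite expr2 mevalM mevalXU /v eqxx mulr1 addr0 subrr mulr0.
  by move/eqP; rewrite oner_eq0.
- move=> a u v /sph_idealP [q1 ->] /sph_idealP [q2 ->].
  by apply/sph_idealP; exists (a * q1 + q2); rewrite mulrDl mulrA.
Qed.

HB.instance Definition _ := isIdealr.Build {mpoly R[n.+1]} sph_ideal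
  sph_ideal_closed.

Definition An : comNzRingType := {ideal_quot sph_ideal}.

Definition xA (i : 'I_n.+1) : An := \pi_An ('X_i).

Definition cA (c : R) : An := \pi_An (c%:MP).

End Sphere.

(* The Clifford algebra C^{0,m} (generators e_0..e_{m-1}, e_i^2 = 1,        *)
(* e_i e_j = - e_j e_i), with coefficients in a commutative ring K,         *)
(* written in the standard basis e_S = e_{s_1} ... e_{s_k} (s_1<...<s_k),   *)
(* S ranging over subsets of {0,...,m-1}.  With K = R this is C^{0,m};      *)
(* with K = A_n it is A_n (x)_R C^{0,m} in coordinates.                      *)

Section Clifford.
Variables (K : comNzRingType) (m : nat).

Local Notation cl := {ffun {set 'I_m} -> K^o}.

(* e_S e_T = csign S T e_{S (+) T} *)
Definition csign (S T : {set 'I_m}) : K :=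
  (-1) ^+ #|[set p : 'I_m * 'I_m | [&& p.1 \in S, p.2 \in T & (p.2 < p.1)%N]]|.

Definition symdiff (S T : {set 'I_m}) : {set 'I_m} := (S :\: T) :|: (T :\: S).

Definition clmul (u v : cl) : cl := [ffun U =>
  \sum_(S : {set 'I_m}) \sum_(T : {set 'I_m})
     (if symdiff S T == U then csign S T * u S * v T else 0)].

Definition cbasis (S : {set 'I_m}) : cl := [ffun U => if U == S then 1 else 0].

Definition cl1 : cl := cbasis set0.

Definition cgen (i : 'I_m) : cl := cbasis [set i].

(* the canonical (reversing) involution: sigma(e_S) = (-1)^(k(k-1)/2) e_S *)
Definition crev (u : cl) : cl := [ffun S : {set 'I_m} => (-1) ^+ 'C(#|S|, 2) * u S].

(* trace of left multiplication by u on the free K-module cl *)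
Definition ctr (u : cl) : K := \sum_(S : {set 'I_m}) clmul u (cbasis S) S.

Definition cbeta (u v : cl) : K := ctr (clmul (crev u) v).

Definition primitive_idempotent (p : cl) : Prop :=
  [/\ clmul p p = p, p <> 0 &
      forall a b : cl, clmul a a = a -> clmul b b = b ->
        clmul a b = 0 -> clmul b a = 0 -> p = a + b -> a = 0 \/ b = 0].

End Clifford.

Notation cl K m := {ffun {set 'I_m} -> K^o}.

Definition submodule (A : comNzRingType) (V : lmodType A) (P : V -> Prop) :=
  P 0 /\ forall (a : A) u v, P u -> P v -> P (a *: u + v).

Definition linear_on (A : comNzRingType) (V W : lmodType A) (P : V -> Prop)
  (f : V -> W) := forall (a : A) u v, P u -> P v -> f (a *: u + v) = a *: f u + f v.

(* P is a finitely generated projective A-module: a retract (direct summand,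
   up to isomorphism) of a free module A^k of finite rank *)
Definition fg_projective (A : comNzRingType) (V : lmodType A) (P : V -> Prop) :=
  submodule P /\
  exists (k : nat) (f : 'rV[A]_k -> V) (g : V -> 'rV[A]_k),
    [/\ linear_on (fun _ => True) f, linear_on P g,
        forall w, P (f w) & forall u, P u -> f (g u) = u].

(* a bilinear form b restricted to P is non-degenerate: the adjoint map
   P -> Hom_A(P, A), u |-> b(u, -) is bijective *)
Definition nondegenerate_on (A : comNzRingType) (V : lmodType A) (P : V -> Prop)
  (b : V -> V -> A) :=
  (forall u, P u -> (forall v, P v -> b u v = 0) -> u = 0) /\
  (forall phi : V -> A^o, linear_on P phi ->
     exists2 u, P u & forall v, P v -> b u v = phi v).

From HB Require Import structures.
From mathcomp Require Import all_boot all_order all_algebra.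
From mathcomp Require Import ring_quotient generic_quotient.
From mathcomp Require Import mpoly.
From mathcomp Require Import reals.
From mathcomp Require Import zify ring.

(** Since the [x_i] lie on the unit sphere and the [e_i] anticommute,
    [x^2 = 1], so [h = (1 - x)/2] is an idempotent and [u |-> h u wp] is an
    A_n-linear projection of the free module [A_n (x) C^{0,n+1}] onto [P_n]:
    [P_n] is a direct summand of a free module of finite rank.
    In the basis [e_S], [beta-hat] is [2^(n+1)] times the coordinate pairing,
    for which left and right multiplication by [a] are adjoint to
    multiplication by [sigma(a)].  Over the reals the coordinate pairing is
    positive definite, and a Gram-matrix rank argument gives
    [wp = wp sigma(wp) y] for some [y].  Then [u |-> u sigma(wp)] is injective
    on [P_n], and pairing against the projection identifies [beta-hat(u, -)]
    on [P_n] with the coordinate pairing against [u sigma(wp)]; this makes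
    the adjoint map of [beta-hat] on [P_n] bijective. *)

Set Implicit Arguments.
Unset Strict Implicit.
Unset Printing Implicit Defensive.

Import GRing.Theory Num.Theory.
Local Open Scope ring_scope.

Section SymDiff.
Variable m : nat.
Implicit Types S T U : {set 'I_m}.

Lemma in_symdiff S T x : (x \in symdiff S T) = (x \in S) (+) (x \in T).
Proof. by rewrite !inE; case: (x \in S); case: (x \in T). Qed.

Lemma symdiffA : associative (@symdiff m).
Proof. by move=> S T U; apply/setP => x; rewrite !in_symdiff addbA. Qed.

Lemma symdiffC : commutative (@symdiff m).
Proof. by move=> S T; apply/setP => x; rewrite !in_symdiff addbC. Qed.

Lemma symdiffss S : symdiff S S = set0.
Proof. by apply/setP => x; rewrite in_symdiff inE addbb. Qed.

Lemma symdiff0s S : symdiff set0 S = S.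
Proof. by apply/setP => x; rewrite in_symdiff inE. Qed.

Lemma symdiffs0 S : symdiff S set0 = S.
Proof. by rewrite symdiffC symdiff0s. Qed.

Lemma symdiffK S T : symdiff S (symdiff S T) = T.
Proof. by rewrite symdiffA symdiffss symdiff0s. Qed.

Lemma symdiffKr S T : symdiff (symdiff T S) S = T.
Proof. by rewrite -symdiffA symdiffss symdiffs0. Qed.

Lemma symdiff_inj S : injective (symdiff S).
Proof. by move=> T U e; rewrite -(symdiffK S T) e symdiffK. Qed.

Lemma symdiff_eq S T U : (symdiff S T == U) = (T == symdiff S U).
Proof. by apply/eqP/eqP => [<-|->]; rewrite symdiffK. Qed.

End SymDiff.

Lemma sign_card_symdiff (K : pzRingType) (X : finType) (A B : {set X}) :
  (-1) ^+ #|(A :\: B) :|: (B :\: A)| = (-1) ^+ #|A| * (-1) ^+ #|B| :> K.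
Proof.
have card_symdiff : (#|(A :\: B) :|: (B :\: A)| + (#|A :&: B|).*2 = #|A| + #|B|)%N.
  rewrite cardsU.
  have -> : (A :\: B) :&: (B :\: A) = set0.
    by apply/setP => x; rewrite !inE; case: (x \in A); case: (x \in B).
  rewrite cards0 subn0 -addnn.
  have := cardsID B A; have := cardsID A B; rewrite (setIC B A); lia.
by rewrite -exprD -card_symdiff exprD -mul2n mulnC exprM sqrr_sign mulr1.
Qed.

Section CliffordSign.
Variables (K : comNzRingType) (m : nat).
Implicit Types S T U : {set 'I_m}.
Local Notation csign := (@csign K m).

Lemma csign_symdiffl S T U : csign (symdiff S T) U = csign S U * csign T U.
Proof.
rewrite /csign -sign_card_symdiff; congr (_ ^+ _); apply: eq_card => p; rewrite !inE.
by case: (p.1 \in S); case: (p.1 \in T); case: (p.2 \in U); case: (p.2 < p.1)%N.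
Qed.

Lemma csign_symdiffr S T U : csign S (symdiff T U) = csign S T * csign S U.
Proof.
rewrite /csign -sign_card_symdiff; congr (_ ^+ _); apply: eq_card => p; rewrite !inE.
by case: (p.1 \in S); case: (p.2 \in T); case: (p.2 \in U); case: (p.2 < p.1)%N.
Qed.

Lemma csign0l T : csign set0 T = 1.
Proof.
by rewrite /csign (_ : [set _ | _] = set0) ?cards0 //; apply/setP => p; rewrite !inE.
Qed.

Lemma csign0r T : csign T set0 = 1.
Proof.
by rewrite /csign (_ : [set _ | _] = set0) ?cards0 //; apply/setP => p; rewrite !inE andbF.
Qed.

Lemma csign_set1 (i j : 'I_m) : csign [set i] [set j] = (-1) ^+ (j < i)%N.
Proof.
rewrite /csign; case: ltnP => [ji|ij].
  rewrite (_ : [set _ | _] = [set (i, j)]) ?cards1 //; apply/setP => -[a b].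
  rewrite !inE -pair_eqE /=; apply/idP/idP => [/and3P[-> -> //]|].
  by case/andP => /eqP -> /eqP ->; rewrite !eqxx ji.
rewrite (_ : [set _ | _] = set0) ?cards0 //; apply/setP => -[a b]; rewrite !inE /=.
by apply/negP => /and3P[/eqP -> /eqP ->]; rewrite ltnNge ij.
Qed.

(* The decreasing, increasing and diagonal pairs partition S x S, and the
   first two are exchanged by (a, b) |-> (b, a). *)
Lemma card_decreasing_pairs S :
  #|[set p : 'I_m * 'I_m | [&& p.1 \in S, p.2 \in S & (p.2 < p.1)%N]]| = 'C(#|S|, 2).
Proof.
set X := [set _ | _].
set Y := [set p : 'I_m * 'I_m | [&& p.1 \in S, p.2 \in S & (p.1 < p.2)%N]].
set D := [set p : 'I_m * 'I_m | [&& p.1 \in S, p.2 \in S & (p.1 == p.2)]].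
have cardY : #|Y| = #|X|.
  have -> : Y = [set (p.2, p.1) | p in X].
    apply/setP => -[a b]; rewrite !inE /=; apply/idP/imsetP => [/and3P[ha hb hab]|].
      by exists (b, a) => //; rewrite !inE /= ha hb hab.
    by move=> [[c d]]; rewrite !inE /= => /and3P[hc hd hcd] [-> ->]; rewrite hc hd hcd.
  by rewrite card_imset // => -[a b] [c d] /= [-> ->].
have cardD : #|D| = #|S|.
  have -> : D = [set (i, i) | i in S].
    apply/setP => -[a b]; rewrite !inE /=; apply/idP/imsetP => [/and3P[ha _ /eqP <-]|].
      by exists a.
    by move=> [c hc [-> ->]]; rewrite hc eqxx.
  by rewrite card_imset // => i j [].
have cardSS : #|setX S S| = (#|X| + #|Y| + #|D|)%N.
  have XY0 : X :&: Y = set0.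
    by apply/setP => p; rewrite !inE; case: ltngtP; rewrite !andbF.
  have XYD0 : (X :|: Y) :&: D = set0.
    by apply/setP => p; rewrite !inE -val_eqE /=; case: ltngtP; rewrite ?andbF.
  have -> : setX S S = X :|: Y :|: D.
    apply/setP => p; rewrite !inE -val_eqE /=.
    by case: (p.1 \in S); case: (p.2 \in S); case: ltngtP.
  by rewrite !cardsU XY0 XYD0 !cards0 !subn0.
move: cardSS; rewrite cardsX cardY cardD bin2 => cardSS.
suff -> : (#|S| * #|S|.-1 = #|X|.*2)%N by rewrite doubleK.
by case: #|S| cardSS => [|k] /=; lia.
Qed.

Lemma csign_diag S : csign S S = (-1) ^+ 'C(#|S|, 2).
Proof. by rewrite /csign card_decreasing_pairs. Qed.

Lemma csign_diag_sign S : (-1) ^+ 'C(#|S|, 2) * csign S S = 1.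
Proof. by rewrite csign_diag -expr2 sqrr_sign. Qed.

End CliffordSign.

Section CliffordAlgebra.
Variables (K : comNzRingType) (m : nat).
Implicit Types S T U V : {set 'I_m}.
Local Notation cl := (cl K m).
Local Notation csign := (@csign K m).
Local Notation cbasis := (@cbasis K m).
Implicit Types u v w : cl.

Lemma cl_addE u v S : (u + v) S = u S + v S.
Proof. exact: ffunE. Qed.

Lemma cl_scaleE (k : K) u S : (k *: u) S = k * u S.
Proof. exact: ffunE. Qed.

Lemma clmulE u v U :
  clmul u v U = \sum_S csign S (symdiff S U) * u S * v (symdiff S U).
Proof.
rewrite ffunE; apply: eq_bigr => S _.
rewrite (bigD1 (symdiff S U)) //= symdiffK eqxx big1 ?addr0 // => T hT.
by rewrite symdiff_eq (negPf hT).
Qed.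

Lemma clmulDl w u v : clmul (u + v) w = clmul u w + clmul v w.
Proof.
apply/ffunP => U; rewrite cl_addE !clmulE -big_split /=.
by apply: eq_bigr => S _; rewrite cl_addE; ring.
Qed.

Lemma clmulDr w u v : clmul w (u + v) = clmul w u + clmul w v.
Proof.
apply/ffunP => U; rewrite cl_addE !clmulE -big_split /=.
by apply: eq_bigr => S _; rewrite cl_addE; ring.
Qed.

Lemma clmulZl (k : K) u v : clmul (k *: u) v = k *: clmul u v.
Proof.
apply/ffunP => U; rewrite cl_scaleE !clmulE mulr_sumr.
by apply: eq_bigr => S _; rewrite cl_scaleE; ring.
Qed.

Lemma clmulZr (k : K) u v : clmul u (k *: v) = k *: clmul u v.
Proof.
apply/ffunP => U; rewrite cl_scaleE !clmulE mulr_sumr.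
by apply: eq_bigr => S _; rewrite cl_scaleE; ring.
Qed.

Lemma clmul0l u : clmul 0 u = 0.
Proof. by rewrite -(scale0r (0 : cl)) clmulZl !scale0r. Qed.

Lemma clmul0r u : clmul u 0 = 0.
Proof. by rewrite -(scale0r (0 : cl)) clmulZr !scale0r. Qed.

Lemma clmulNl u v : clmul (- u) v = - clmul u v.
Proof. by rewrite -scaleN1r clmulZl scaleN1r. Qed.

Lemma clmulBl w u v : clmul (u - v) w = clmul u w - clmul v w.
Proof. by rewrite clmulDl clmulNl. Qed.

Lemma clmulBr w u v : clmul w (u - v) = clmul w u - clmul w v.
Proof. by rewrite clmulDr -scaleN1r clmulZr scaleN1r. Qed.

Lemma clmul_suml (I : Type) (r : seq I) (P : pred I) (F : I -> cl) w :
  clmul (\sum_(i <- r | P i) F i) w = \sum_(i <- r | P i) clmul (F i) w.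
Proof. exact: (big_morph (fun x => clmul x w) (clmulDl w) (clmul0l w)). Qed.

Lemma clmul_sumr (I : Type) (r : seq I) (P : pred I) (F : I -> cl) w :
  clmul w (\sum_(i <- r | P i) F i) = \sum_(i <- r | P i) clmul w (F i).
Proof. exact: (big_morph (clmul w) (clmulDr w) (clmul0r w)). Qed.

Lemma clmulA u v w : clmul (clmul u v) w = clmul u (clmul v w).
Proof.
apply/ffunP => U; rewrite !clmulE.
under eq_bigr => V _ do rewrite clmulE mulr_sumr mulr_suml.
rewrite exchange_big /=; apply: eq_bigr => S _.
rewrite (reindex_inj (@symdiff_inj m S)) /= clmulE mulr_sumr.
apply: eq_bigr => T _; rewrite symdiffK.
set X := symdiff (symdiff S T) U.
have eX : symdiff T (symdiff S U) = X by rewrite /X symdiffA (symdiffC T S).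
have -> : csign S (symdiff S U) = csign S T * csign S X.
  by rewrite -csign_symdiffr -eX symdiffK.
by rewrite eX csign_symdiffl; ring.
Qed.

Lemma cl_expand u : u = \sum_S u S *: cbasis S.
Proof.
apply/ffunP => U; rewrite sum_ffunE (bigD1 U) //= big1 ?addr0.
  by rewrite cl_scaleE ffunE eqxx mulr1.
by move=> S hS; rewrite cl_scaleE ffunE eq_sym (negPf hS) mulr0.
Qed.

Lemma clmul_basis S T : clmul (cbasis S) (cbasis T) = csign S T *: cbasis (symdiff S T).
Proof.
apply/ffunP => U; rewrite cl_scaleE clmulE (bigD1 S) //= big1 ?addr0.
  rewrite !ffunE eqxx mulr1 symdiff_eq.
  by case: eqP => [->|_]; rewrite ?symdiffK // !mulr0.
by move=> S' hS'; rewrite !ffunE (negPf hS') mulr0 mul0r.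
Qed.

Lemma clmul1l u : clmul (cl1 K m) u = u.
Proof.
by rewrite [u in LHS]cl_expand clmul_sumr; under eq_bigr do
  rewrite clmulZr clmul_basis csign0l scale1r symdiff0s; rewrite -cl_expand.
Qed.

Lemma clmul1r u : clmul u (cl1 K m) = u.
Proof.
by rewrite [u in LHS]cl_expand clmul_suml; under eq_bigr do
  rewrite clmulZl clmul_basis csign0r scale1r symdiffs0; rewrite -cl_expand.
Qed.

Lemma crevD u v : crev (u + v) = crev u + crev v.
Proof. by apply/ffunP => S; rewrite !ffunE mulrDr. Qed.

Lemma crevZ (k : K) u : crev (k *: u) = k *: crev u.
Proof. by apply/ffunP => S; rewrite !ffunE mulrCA. Qed.

Lemma crevB u v : crev (u - v) = crev u - crev v.
Proof. by rewrite crevD -scaleN1r crevZ scaleN1r. Qed.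

Lemma crevK u : crev (crev u) = u.
Proof. by apply/ffunP => S; rewrite !ffunE mulrA -expr2 sqrr_sign mul1r. Qed.

Lemma crev_basis S : crev (cbasis S) = (-1) ^+ 'C(#|S|, 2) *: cbasis S.
Proof. by apply/ffunP => U; rewrite cl_scaleE !ffunE; case: eqP => [->|]; rewrite ?mulr0. Qed.

Lemma crev1 : crev (cl1 K m) = cl1 K m.
Proof. by rewrite crev_basis cards0 bin0n scale1r. Qed.

Lemma crev_gen (i : 'I_m) : crev (cgen K i) = cgen K i.
Proof. by rewrite crev_basis cards1 bin_small // scale1r. Qed.

Lemma crev_sum (I : Type) (r : seq I) (P : pred I) (F : I -> cl) :
  crev (\sum_(i <- r | P i) F i) = \sum_(i <- r | P i) crev (F i).
Proof.
apply: (big_morph _ crevD); apply/ffunP => S; rewrite !ffunE mulr0 //.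
Qed.

Definition ip u v : K := \sum_S u S * v S.

Lemma ipC u v : ip u v = ip v u.
Proof. by apply: eq_bigr => S _; rewrite mulrC. Qed.

Lemma ipZl (k : K) u v : ip (k *: u) v = k * ip u v.
Proof. by rewrite /ip mulr_sumr; apply: eq_bigr => S _; rewrite ffunE mulrA. Qed.

Lemma ip_basis u S : ip u (cbasis S) = u S.
Proof.
rewrite /ip (bigD1 S) //= big1 ?addr0; first by rewrite ffunE eqxx mulr1.
by move=> T hT; rewrite ffunE (negPf hT) mulr0.
Qed.

Lemma ip_clmull a u v : ip (clmul a u) v = ip u (clmul (crev a) v).
Proof.
rewrite /ip.
under eq_bigr => U _ do rewrite clmulE mulr_suml.
under [RHS]eq_bigr => T _ do rewrite clmulE mulr_sumr.
rewrite exchange_big [RHS]exchange_big /=; apply: eq_bigr => S _.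
rewrite (reindex_inj (@symdiff_inj m S)) /=; apply: eq_bigr => T _.
rewrite symdiffK ffunE csign_symdiffr.
transitivity ((-1) ^+ 'C(#|S|, 2) * csign S S * (csign S T * a S * u T * v (symdiff S T))).
  by rewrite csign_diag_sign mul1r.
ring.
Qed.

Lemma ip_clmulr a u v : ip (clmul u a) v = ip u (clmul v (crev a)).
Proof.
rewrite /ip.
under eq_bigr => U _ do rewrite clmulE mulr_suml.
rewrite exchange_big /=; apply: eq_bigr => T _.
rewrite clmulE mulr_sumr (reindex_inj (@symdiff_inj m T)) /=.
rewrite [RHS](reindex_inj (@symdiff_inj m T)) /=; apply: eq_bigr => S _.
rewrite symdiffK (symdiffC T S) symdiffKr ffunE csign_symdiffl.
transitivity ((-1) ^+ 'C(#|S|, 2) * csign S S * (csign T S * u T * a S * v (symdiff S T))).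
  by rewrite csign_diag_sign mul1r.
ring.
Qed.

Lemma ctrZ (k : K) u : ctr (k *: u) = k * ctr u.
Proof. by rewrite /ctr mulr_sumr; apply: eq_bigr => S _; rewrite clmulZl ffunE. Qed.

(* Left multiplication by e_U permutes the basis up to sign, without fixed
   points unless U = 0. *)
Lemma ctr_basis U : ctr (cbasis U) = if U == set0 then #|{set 'I_m}|%:R else 0.
Proof.
rewrite /ctr; under eq_bigr => S _ do rewrite clmul_basis !ffunE.
case: eqP => [->|/eqP U0].
  under eq_bigr => S _ do rewrite symdiff0s eqxx csign0l scale1r.
  by rewrite sumr_const.
rewrite big1 // => S _; case: eqP => [SU|]; last by rewrite scaler0.
by move: U0; rewrite -(symdiffKr S U) symdiffC -SU symdiffss eqxx.
Qed.

Lemma cbeta_basis S T : cbeta (cbasis S) (cbasis T) = if S == T then #|{set 'I_m}|%:R else 0.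
Proof.
rewrite /cbeta crev_basis clmulZl clmul_basis scalerA ctrZ ctr_basis.
rewrite symdiff_eq symdiffs0 eq_sym; case: eqP => [->|]; last by rewrite mulr0.
by rewrite csign_diag_sign mul1r.
Qed.

Lemma cgen_anticomm (i j : 'I_m) :
  clmul (cgen K i) (cgen K j) + clmul (cgen K j) (cgen K i) =
  (if i == j then 2 else 0) *: cl1 K m.
Proof.
rewrite !clmul_basis csign_set1 csign_set1 (symdiffC [set j]) -scalerDl.
case: eqP => [->|/eqP ij]; first by rewrite ltnn symdiffss.
suff -> : (-1) ^+ (j < i)%N + (-1) ^+ (i < j)%N = 0 :> K by rewrite !scale0r.
case: ltngtP => [_|_|/val_inj eq_ij]; rewrite /= ?expr0 ?expr1 ?addNr ?addrN //.
by rewrite eq_ij eqxx in ij.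
Qed.

(* Adding the square to its index-swapped form gives [2 x^2 = 2], hence only
   the regularity of [2] is needed. *)
Lemma clmul_vec_sqr (a : 'I_m -> K) : GRing.lreg (2 : K) -> \sum_i a i ^+ 2 = 1 ->
  clmul (\sum_i a i *: cgen K i) (\sum_i a i *: cgen K i) = cl1 K m.
Proof.
move=> reg2 norm1; set G := clmul _ _.
have eG : G = \sum_i \sum_j (a i * a j) *: clmul (cgen K i) (cgen K j).
  rewrite /G clmul_suml; apply: eq_bigr => i _.
  rewrite clmulZl clmul_sumr scaler_sumr; apply: eq_bigr => j _.
  by rewrite clmulZr scalerA.
have eG' : G = \sum_i \sum_j (a j * a i) *: clmul (cgen K j) (cgen K i).
  by rewrite eG exchange_big.
have G2 : G + G = 2 *: cl1 K m.
  rewrite {1}eG eG' -big_split /=.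
  under eq_bigr => i _ do rewrite -big_split /=.
  under eq_bigr => i _ do under eq_bigr => j _ do
    rewrite (mulrC (a j)) -scalerDr cgen_anticomm.
  rewrite (eq_bigr (fun i => a i ^+ 2 *: (2 *: cl1 K m))); last first.
    move=> i _; rewrite (bigD1 i) //= eqxx big1 ?addr0 ?expr2 // => j /negPf ij.
    by rewrite eq_sym ij scale0r scaler0.
  by rewrite -scaler_suml norm1 scale1r.
apply/ffunP => S; apply: reg2.
by rewrite -!cl_scaleE -G2 scaler_nat mulr2n.
Qed.

Lemma crev_vec (a : 'I_m -> K) : crev (\sum_i a i *: cgen K i) = \sum_i a i *: cgen K i.
Proof. by rewrite crev_sum; apply: eq_bigr => i _; rewrite crevZ crev_gen. Qed.

End CliffordAlgebra.

Section Coordinates.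
Variables (K : comNzRingType) (m : nat).
Local Notation cl := (cl K m).
Local Notation N := #|{set 'I_m}|.

Definition cl2rV (u : cl) : 'rV[K]_N := \row_i u (enum_val i).
Definition rV2cl (r : 'rV[K]_N) : cl := [ffun S => r 0 (enum_rank S)].

Lemma rV2clK : cancel rV2cl cl2rV.
Proof. by move=> r; apply/rowP => i; rewrite !mxE ffunE enum_valK. Qed.

Lemma cl2rVK : cancel cl2rV rV2cl.
Proof. by move=> u; apply/ffunP => S; rewrite ffunE mxE enum_rankK. Qed.

Definition lmul_mx (a : cl) : 'M[K]_N :=
  \matrix_(i, j) clmul a (cbasis K (enum_val i)) (enum_val j).

Lemma cl2rV_clmul a c : cl2rV (clmul a c) = cl2rV c *m lmul_mx a.
Proof.
apply/rowP => j; rewrite !mxE [c in LHS]cl_expand clmul_sumr sum_ffunE.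
rewrite (big_enum_val (A := predT)) /=.
by apply: eq_bigr => i _; rewrite clmulZr cl_scaleE !mxE.
Qed.

Lemma lmul_mx_crev a : lmul_mx (crev a) = (lmul_mx a)^T.
Proof. by apply/matrixP => i j; rewrite !mxE -!ip_basis ip_clmull ipC crevK. Qed.

End Coordinates.

Section CoefficientChange.
Variables (K L : comNzRingType) (f : {rmorphism K -> L}) (m : nat).

Definition cmap (u : cl K m) : cl L m := [ffun S => f (u S)].

Lemma cmap_clmul u v : cmap (clmul u v) = clmul (cmap u) (cmap v).
Proof.
apply/ffunP => U; rewrite ffunE !clmulE rmorph_sum; apply: eq_bigr => S _.
by rewrite !ffunE !rmorphM rmorphXn rmorphN1.
Qed.

Lemma cmap_crev u : cmap (crev u) = crev (cmap u).
Proof. by apply/ffunP => S; rewrite !ffunE rmorphM rmorphXn rmorphN1. Qed.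

(* The paper's [beta-hat]: the trace form extended L-bilinearly along [f]. *)
Definition cbeta_ext (u v : cl L m) : L :=
  \sum_S \sum_T u S * v T * f (cbeta (cbasis K S) (cbasis K T)).

Lemma cbeta_extE u v : cbeta_ext u v = #|{set 'I_m}|%:R * ip u v.
Proof.
rewrite /cbeta_ext /ip mulr_sumr; apply: eq_bigr => S _.
rewrite (bigD1 S) //= big1 ?addr0 => [|T ST]; last first.
  by rewrite cbeta_basis eq_sym (negPf ST) rmorph0 mulr0.
by rewrite cbeta_basis eqxx rmorph_nat mulrC.
Qed.

End CoefficientChange.

Section RealClifford.
Variable F : realFieldType.

Lemma mulmx_trmx_eq0 p k (w : 'M[F]_(p, k)) : w *m w^T = 0 -> w = 0.
Proof.
move=> wwT0; apply/matrixP => r j; rewrite mxE.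
have : \sum_i w r i ^+ 2 = 0.
  have := congr1 (fun M : 'M_p => M r r) wwT0; rewrite !mxE => e; rewrite -[RHS]e.
  by apply: eq_bigr => i _; rewrite mxE expr2.
move/eqP; rewrite psumr_eq0 => [/allP/(_ j)|i _]; last exact: sqr_ge0.
by rewrite mem_index_enum sqrf_eq0 => /(_ isT)/eqP.
Qed.

(* [B^T B] and [B] have the same kernel, hence the same rank. *)
Lemma submx_trmx_mul p k (B : 'M[F]_(p, k)) : (B <= B^T *m B)%MS.
Proof.
have ker_eq : (kermx (B^T *m B) :=: kermx B^T)%MS.
  apply/eqmxP/andP; split; apply/sub_kermxP.
    apply/mulmx_trmx_eq0; rewrite trmx_mul trmxK.
    have := sub_kermxP (submx_refl (kermx (B^T *m B))).
    by rewrite !mulmxA => ->; rewrite mul0mx.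
  by rewrite mulmxA (sub_kermxP (submx_refl _)) mul0mx.
have rank_eq : \rank (B^T *m B) = \rank B.
  have := mxrank_ker (B^T *m B); rewrite ker_eq mxrank_ker mxrank_tr.
  have := rank_leq_col B; have := rank_leq_row (B^T *m B); lia.
have /leqifP := mxrank_leqif_sup (submxMl B^T B).
by rewrite rank_eq ltnn; case: ifP.
Qed.

Lemma clmul_crev_factor m (W : cl F m) : exists y, clmul W (clmul (crev W) y) = W.
Proof.
have /submxP [D WD] : (cl2rV W <= (lmul_mx W)^T *m lmul_mx W)%MS.
  by rewrite (submx_trans _ (submx_trmx_mul _)) // -[W in cl2rV W]clmul1r cl2rV_clmul submxMl.
exists (rV2cl D).
by rewrite -[LHS]cl2rVK !cl2rV_clmul lmul_mx_crev rV2clK -mulmxA -WD cl2rVK.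
Qed.

End RealClifford.

Section ModuleFacts.
Variables (A : comNzRingType) (V : lmodType A) (P : V -> Prop).
Hypothesis P_submodule : submodule P.

Lemma linear_on_sum (W : lmodType A) (f : V -> W) : linear_on P f ->
  forall (I : finType) (k : I -> A) (F : I -> V),
  (forall i, P (F i)) -> f (\sum_i k i *: F i) = \sum_i k i *: f (F i).
Proof.
case: P_submodule => P0 P_lin f_lin I k F PF.
have f0 : f 0 = 0.
  have := f_lin 1 0 0 P0 P0; rewrite scaler0 addr0 scale1r => e.
  by apply: (addrI (f 0)); rewrite addr0 -e.
pose Q x y := P x /\ f x = y.
have [] // : Q (\sum_i k i *: F i) (\sum_i k i *: f (F i)).
apply: (big_rec2 Q); first by [].
by move=> i x _ _ [Px <-]; split; [exact: P_lin | exact: f_lin].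
Qed.

Lemma nondegenerate_on_scale (b b' : V -> V -> A) (c c' : A) :
  c' * c = 1 -> (forall k u v, b (k *: u) v = k * b u v) ->
  (forall u v, b' u v = c * b u v) ->
  nondegenerate_on P b -> nondegenerate_on P b'.
Proof.
move=> cc' bZ b'E [b_inj b_surj]; split.
  move=> u Pu b'u0; apply: b_inj => // v Pv.
  by rewrite -[LHS]mul1r -cc' -mulrA -b'E b'u0 ?mulr0.
move=> phi /b_surj [u Pu bu]; exists (c' *: u).
  by rewrite -[_ *: u]addr0; apply: P_submodule.2; case: P_submodule.
by move=> v Pv; rewrite b'E bZ mulrA (mulrC c) cc' mul1r bu.
Qed.

End ModuleFacts.

Section KernelOfPhi.
Variables (K : comNzRingType) (m : nat) (x W : cl K m) (half : K).
Hypotheses (x_sqr : clmul x x = cl1 K m) (crev_x : crev x = x).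
Hypotheses (half2 : half * 2 = 1) (W_idem : clmul W W = W).
Implicit Types u v c : cl K m.

Definition kerPhi u : Prop := clmul u W = u /\ half *: (clmul x u + u) = 0.

Lemma kerPhi_submodule : submodule kerPhi.
Proof.
split; first by rewrite /kerPhi clmul0l clmul0r addr0 scaler0.
move=> k u v [uW xu] [vW xv]; split; first by rewrite clmulDl clmulZl uW vW.
rewrite clmulDr clmulZr addrACA -scalerDr (scalerDr half) xv addr0.
by rewrite scalerA mulrC -scalerA xu scaler0.
Qed.

(* The idempotent [(1 - x)/2], projecting onto the (-1)-eigenspace of [x]. *)
Definition negproj : cl K m := half *: (cl1 K m - x).

Definition projPhi u : cl K m := clmul negproj (clmul u W).

Lemma negproj_id u : clmul x u = - u -> clmul negproj u = u.
Proof.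
move=> xu; rewrite clmulZl clmulBl clmul1l xu opprK.
by rewrite -mulr2n -scaler_nat scalerA half2 scale1r.
Qed.

Lemma clmul_x_negproj : clmul x negproj = - negproj.
Proof. by rewrite clmulZr clmulBr clmul1r x_sqr -scalerN opprB. Qed.

Lemma crev_negproj : crev negproj = negproj.
Proof. by rewrite crevZ crevB crev1 crev_x. Qed.

Lemma kerPhiE u : kerPhi u <-> clmul u W = u /\ clmul x u = - u.
Proof.
split=> -[uW xu]; split=> //; last by rewrite xu addNr scaler0.
apply/eqP; rewrite -addr_eq0; apply/eqP.
by rewrite -[LHS]scale1r -half2 mulrC -scalerA xu scaler0.
Qed.

Lemma projPhi_id u : kerPhi u -> projPhi u = u.
Proof. by case/kerPhiE => uW xu; rewrite /projPhi uW negproj_id. Qed.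

Lemma kerPhi_projPhi u : kerPhi (projPhi u).
Proof.
apply/kerPhiE; split; first by rewrite /projPhi !clmulA W_idem.
by rewrite /projPhi -clmulA clmul_x_negproj clmulNl.
Qed.

Lemma projPhi_linear (k : K) u v : projPhi (k *: u + v) = k *: projPhi u + projPhi v.
Proof. by rewrite /projPhi clmulDl clmulZl clmulDr clmulZr. Qed.

HB.instance Definition _ := GRing.isLinear.Build K (cl K m) (cl K m) *:%R projPhi
  (fun k u v => projPhi_linear k u v).

Lemma kerPhi_fg_projective : fg_projective kerPhi.
Proof.
split; first exact: kerPhi_submodule.
exists #|{set 'I_m}|, (fun r => projPhi (rV2cl r)), (@cl2rV K m); split.
- move=> k r s _ _; rewrite -projPhi_linear; congr projPhi.
  by apply/ffunP => S; rewrite !ffunE !mxE.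
- by move=> k u v _ _; apply/rowP => i; rewrite !mxE !ffunE.
- by move=> r; apply: kerPhi_projPhi.
- by move=> u ker_u; rewrite cl2rVK projPhi_id.
Qed.

Lemma ip_projPhi u c : kerPhi u -> ip u (projPhi c) = ip c (clmul u (crev W)).
Proof.
case/kerPhiE => _ xu.
by rewrite /projPhi -crev_negproj -ip_clmull negproj_id // ipC ip_clmulr.
Qed.

Variable y : cl K m.
Hypothesis W_factor : clmul W (clmul (crev W) y) = W.

Lemma kerPhi_nondegenerate : nondegenerate_on kerPhi (@ip K m).
Proof.
have undo_crevW u : kerPhi u -> clmul (clmul u (crev W)) y = u.
  by case=> uW _; rewrite clmulA -{1}uW clmulA W_factor uW.
split.
  move=> u ker_u ortho_u; rewrite -(undo_crevW u ker_u).
  suff -> : clmul u (crev W) = 0 by rewrite clmul0l.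
  apply/ffunP => S; rewrite [RHS]ffunE -ip_basis ipC -ip_projPhi //.
  exact/ortho_u/kerPhi_projPhi.
move=> phi phi_lin.
pose g : cl K m := [ffun S => phi (projPhi (clmul (cbasis K S) y))].
have phiE c : phi (projPhi (clmul c y)) = ip c g.
  rewrite [c in LHS]cl_expand clmul_suml; under eq_bigr do rewrite clmulZl.
  rewrite linear_sum; under eq_bigr do rewrite linearZ.
  rewrite (linear_on_sum kerPhi_submodule phi_lin) => [|S]; last exact: kerPhi_projPhi.
  by apply: eq_bigr => S _; rewrite ffunE.
exists (projPhi g); first exact: kerPhi_projPhi.
by move=> v ker_v; rewrite ipC ip_projPhi // ipC -phiE undo_crevW // projPhi_id.
Qed.

End KernelOfPhi.

Section Sphere.
Variables (R : realType) (n : nat).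
Local Open Scope quotient_scope.

HB.instance Definition _ :=
  GRing.RMorphism.copy (@cA R n) (\pi_(An R n) \o @mpolyC n.+1 R).

Lemma sum_xA_sqr : \sum_i @xA R n i ^+ 2 = 1.
Proof.
have : \pi_(An R n) (@sph_poly R n) = 0.
  have : @sph_poly R n - 0 \in @sph_ideal R n.
    by rewrite subr0; apply/sph_idealP; exists 1; rewrite mul1r.
  by rewrite Quotient.idealrBE => /eqP ->; rewrite rmorph0.
rewrite rmorphB rmorph1 rmorph_sum => /eqP; rewrite subr_eq0 => /eqP <-.
by apply: eq_bigr => i _; rewrite rmorphXn.
Qed.

End Sphere.

Theorem mainTheorem3 (R : realType) (n : nat) (hn : (1 <= n)%N)
    (wp : cl R n.+1) (hwp : primitive_idempotent wp) :
  let A := An R n in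
  (* R-coefficients viewed in A_n: C^{0,n+1} -> A_n (x) C^{0,n+1}, u |-> 1 (x) u *)
  let liftC (u : cl R n.+1) : cl A n.+1 := [ffun S => @cA R n (u S)] in
  (* A_n (x)_R E  with  E = C^{0,n+1} wp,  inside  A_n (x)_R C^{0,n+1} *)
  let AE (u : cl A n.+1) : Prop := clmul u (liftC wp) = u in
  (* bold x = sum_i x_i (x) e_i *)
  let xx : cl A n.+1 := \sum_(i < n.+1) @xA R n i *: cgen A i in
  (* Phi = left multiplication by (x + 1)/2 *)
  let Phi (u : cl A n.+1) : cl A n.+1 := @cA R n (2^-1) *: (clmul xx u + u) in
  (* P_n = ker (Phi : A_n (x) E -> A_n (x) E) *)
  let Pn (u : cl A n.+1) : Prop := AE u /\ Phi u = 0 in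
  (* beta-hat(a (x) x, b (x) y) = a b beta(x, y), extended A_n-bilinearly *)
  let bhat (u v : cl A n.+1) : A :=
    \sum_(S : {set 'I_n.+1}) \sum_(T : {set 'I_n.+1})
       u S * v T * @cA R n (cbeta (cbasis R S) (cbasis R T)) in
  fg_projective Pn /\ nondegenerate_on Pn bhat.
Proof.
move=> A liftC AE xx Phi Pn bhat.
have [wp_idem _ _] := hwp.
have [y wp_factor] := clmul_crev_factor wp.
pose W := cmap (cA n) wp.
have W_idem : clmul W W = W by rewrite -cmap_clmul wp_idem.
have W_factor : clmul W (clmul (crev W) (cmap (cA n) y)) = W.
  by rewrite -cmap_crev -!cmap_clmul wp_factor.
have half2 : cA n 2^-1 * 2 = 1 :> A.
  by rewrite -(rmorph_nat (cA n)) -rmorphM mulVf ?pnatr_eq0 ?rmorph1.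
have two_lreg : GRing.lreg (2 : A).
  by move=> a b e; rewrite -[a]mul1r -[b]mul1r -half2 -!mulrA e.
have x_sqr : clmul xx xx = cl1 A n.+1 := clmul_vec_sqr two_lreg (sum_xA_sqr R n).
have Pn_submodule : submodule Pn := @kerPhi_submodule A n.+1 xx W (cA n 2^-1).
split; first exact: (kerPhi_fg_projective x_sqr half2 W_idem).
have N_inv : cA n (#|{set 'I_n.+1}|%:R^-1) * #|{set 'I_n.+1}|%:R = 1 :> A.
  have N_gt0 : (0 < #|{set 'I_n.+1}|)%N by apply/card_gt0P; exists set0.
  by rewrite -(rmorph_nat (cA n)) -rmorphM mulVf ?rmorph1 // pnatr_eq0 -lt0n.
apply: (nondegenerate_on_scale Pn_submodule N_inv (@ipZl _ _)); first exact: cbeta_extE.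
exact: (kerPhi_nondegenerate x_sqr (crev_vec _) half2 W_idem W_factor).
Qed.
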